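(* Let $\sigma$ be a signature, $\Delta$ a set of $\mathcal{CO}[\sigma]$-formulas and $\varphi$ a $\mathcal{COD}[\sigma]$-formula. Then $\Delta\models^g\varphi$ if and only if $\Delta\models^g\varphi^\ast_f$ for some full instantiation $\varphi^\ast_f$ of $\varphi^\ast$.
   Context: A signature $\sigma=(\mathrm{Dom},\mathrm{Ran})$: $\mathrm{Dom}$ nonempty finite set of variables, each with nonempty finite range $\mathrm{Ran}(X)$; $\mathbf X=\mathbf x$ abbreviates $X_1=x_1\wedge\dots\wedge X_n=x_n$ ($\mathbf x\in\mathrm{Ran}(\mathbf X)=\prod\mathrm{Ran}(X_i)$), inconsistent if it contains $X=x,X=x'$ with $x\ne x'$. $\mathcal{CO}[\sigma]$: $\alpha::=X=x\mid\neg\alpha\mid\alpha\wedge\alpha\mid\alpha\vee\alpha\mid\mathbf X=\mathbf x\;\Box\!\!\rightarrow\alpha$. $\mathcal{COD}[\sigma]$: $\varphi::=X=x\mid{=}(\mathbf X;Y)\mid\neg\alpha\mid\varphi\wedge\varphi\mid\varphi\vee\varphi\mid\mathbf X=\mathbf x\;\Box\!\!\rightarrow\varphi$ ($\alpha\in\mathcal{CO}[\sigma]$); ${=}(Y)$ is ${=}(\mathbf X;Y)$ with empty $\mathbf X$ (constancy atom). Systems of functions $\mathcal F$: for each $V\in\mathrm{En}(\mathcal F)\subseteq\mathrm{Dom}$ parents $PA^{\mathcal F}_V\subseteq\mathrm{Dom}\setminus\{V\}$ and $\mathcal F_V:\mathrm{Ran}(PA^{\mathcal F}_V)\to\mathrm{Ran}(V)$;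 $\mathrm{Ex}(\mathcal F)=\mathrm{Dom}\setminus\mathrm{En}(\mathcal F)$; only recursive (acyclic parent graph). An assignment $s$ is compatible with $\mathcal F$ if $s(V)=\mathcal F_V(s(PA^{\mathcal F}_V))$ for $V\in\mathrm{En}(\mathcal F)$. A generalized causal team is a set $T$ of compatible pairs $(s,\mathcal F)$; $T^-=\{s:(s,\mathcal F)\in T\}$. For consistent $\mathbf X=\mathbf x$: $\mathcal F_{\mathbf X=\mathbf x}$ restricts $\mathcal F$ to $\mathrm{En}(\mathcal F)\setminus\mathbf X$; $s^{\mathcal F}_{\mathbf X=\mathbf x}$: $X_i\mapsto x_i$, $V\mapsto s(V)$ on $\mathrm{Ex}(\mathcal F)\setminus\mathbf X$, $V\mapsto\mathcal F_V(s^{\mathcal F}_{\mathbf X=\mathbf x}(PA^{\mathcal F}_V))$ on $\mathrm{En}(\mathcal F)\setminus\mathbf X$; $T_{\mathbf X=\mathbf x}=\{(s^{\mathcal F}_{\mathbf X=\mathbf x},\mathcal F_{\mathbf X=\mathbf x}):(s,\mathcal F)\in T\}$. $\models^g$: $T\models X=x$ iff $s(X)=x$ for all $s\in T^-$; $T\models{=}(\mathbf X;Y)$ iff for all $s,s'\in T^-$, $s(\mathbf X)=s'(\mathbf X)$ implies $s(Y)=s'(Y)$; $T\models\neg\alpha$ iff $\{(s,\mathcal F)\}\not\models\alpha$ for all $(s,\mathcal F)\in T$; $\wedge$ classical; $T\models\varphi\vee\psi$ iff $T=T_1\cup T_2$ with $T_1\models\varphi$, $T_2\models\psi$; $T\models\mathbf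 X=\mathbf x\;\Box\!\!\rightarrow\varphi$ iff $\mathbf X=\mathbf x$ inconsistent or $T_{\mathbf X=\mathbf x}\models\varphi$. $\Delta\models^g\varphi$: every generalized causal team over $\sigma$ satisfying all of $\Delta$ satisfies $\varphi$. $\varphi^\ast$ is obtained from $\varphi$ by replacing every occurrence of a dependence atom ${=}(\mathbf X;Y)$ by $\bigvee_{\mathbf x\in\mathrm{Ran}(\mathbf X)}(\mathbf X=\mathbf x\wedge{=}(Y))$ (so all dependence atoms in $\varphi^\ast$ are constancy atoms). Let $\mathbf d=\langle[{=}(X_1),k_1],\dots,[{=}(X_n),k_n]\rangle$ list all occurrences of constancy atoms in $\varphi^\ast$ ($[{=}(X_i),k_i]$ the $k_i$-th occurrence of ${=}(X_i)$). An instantiating function is $f:\{1,\dots,n\}\to\bigcup_i\mathrm{Ran}(X_i)$ with $f(i)\in\mathrm{Ran}(X_i)$; the full instantiation $\varphi^\ast_f$ is obtained from $\varphi^\ast$ by replacing each occurrence $[{=}(X_i),k_i]$ by $X_i=f(i)$ (a $\mathcal{CO}[\sigma]$-formula). *)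

From mathcomp Require Import all_boot.
Set Implicit Arguments. Unset Strict Implicit. Unset Printing Implicit Defensive.

(* Causal teams with dependence atoms: generalized causal team semantics.
   Signature: a finite type of variables V (= Dom) and, for each X : V, a
   finite type Ran X of its values. *)

Section CausalTeams.
Variable V : finType.
Variable Ran : V -> finType.

Definition lit := {X : V & Ran X}.

(* Syntax of CO[sigma]. The list l in [CCf l a] is X = x (X1=x1 /\ ... /\ Xn=xn). *)
Inductive co : Type :=
  | CEq (X : V) (x : Ran X)
  | CNeg (a : co)
  | CAnd (a b : co)
  | COr (a b : co)
  | CCf (l : seq lit) (a : co).

(* Syntax of COD[sigma]; [DDep Xs Y] is =(Xs;Y), [DDep [::] Y] is =(Y). *)
Inductive cod : Type :=
  | DEq (X : V) (x : Ran X)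
  | DDep (Xs : seq V) (Y : V)
  | DNeg (a : co)
  | DAnd (p q : cod)
  | DOr (p q : cod)
  | DCf (l : seq lit) (p : cod).

Definition assign := forall X : V, Ran X.

(* Systems of functions: [en X] says X is endogenous, [pa X] are the parents
   of X, and [fn X] is F_X, given as a function of the whole assignment that
   only depends on the parents (see [wf_system]). *)
Record system := System {
  en : V -> bool;
  pa : V -> V -> bool;   (* pa X Y : Y is a parent of X *)
  fn : forall X : V, assign -> Ran X }.

Definition wf_system (F : system) : Prop :=
  (forall X, ~~ pa F X X) /\
  (forall X (s s' : assign), (forall Y, pa F X Y -> s Y = s' Y) ->
       fn F X s = fn F X s') /\
  (* recursive: the parent graph (on endogenous variables) is acyclic *)
  well_founded (fun Y X => en F X && pa F X Y).

Definition compatible (s : assign) (F : system) : Prop :=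
  forall X, en F X -> s X = fn F X s.

Definition team := assign * system -> Prop.

Definition gct (T : team) : Prop :=
  forall p, T p -> wf_system p.2 /\ compatible p.1 p.2.

Definition team_minus (T : team) (s : assign) : Prop := exists F, T (s, F).

Definition consistent (l : seq lit) : Prop :=
  forall u v, u \in l -> v \in l -> tag u = tag v -> u = v.

Definition intv_sys (F : system) (l : seq lit) : system :=
  System (fun X => en F X && (X \notin map tag l)) (pa F) (fn F).

(* t = s^F_{X=x}, as the solution of its defining (recursive) equations *)
Definition intv_assign (F : system) (l : seq lit) (s t : assign) : Prop :=
  forall X,
    (forall x : Ran X, existT _ X x \in l -> t X = x) /\
    (X \notin map tag l -> ~~ en F X -> t X = s X) /\
    (X \notin map tag l -> en F X -> t X = fn F X t).

Definition team_intv (T : team) (l : seq lit) : team :=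
  fun p => exists s F, T (s, F) /\ p.2 = intv_sys F l /\ intv_assign F l s p.1.

Definition team_union (T T1 T2 : team) : Prop :=
  forall p, T p <-> T1 p \/ T2 p.

Fixpoint sat_co (T : team) (a : co) {struct a} : Prop :=
  match a with
  | CEq X x => forall s, team_minus T s -> s X = x
  | CNeg b => forall p, T p -> ~ sat_co (fun q => q = p) b
  | CAnd b c => sat_co T b /\ sat_co T c
  | COr b c => exists T1 T2, team_union T T1 T2 /\ sat_co T1 b /\ sat_co T2 c
  | CCf l b => ~ consistent l \/ sat_co (team_intv T l) b
  end.

Fixpoint sat (T : team) (p : cod) {struct p} : Prop :=
  match p with
  | DEq X x => forall s, team_minus T s -> s X = x
  | DDep Xs Y => forall s s', team_minus T s -> team_minus T s' ->
        (forall X, X \in Xs -> s X = s' X) -> s Y = s' Y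
  | DNeg b => forall q, T q -> ~ sat_co (fun r => r = q) b
  | DAnd p1 p2 => sat T p1 /\ sat T p2
  | DOr p1 p2 => exists T1 T2, team_union T T1 T2 /\ sat T1 p1 /\ sat T2 p2
  | DCf l p1 => ~ consistent l \/ sat (team_intv T l) p1
  end.

Definition entails_co (Delta : co -> Prop) (a : co) : Prop :=
  forall T, gct T -> (forall b, Delta b -> sat_co T b) -> sat_co T a.

Definition entails (Delta : co -> Prop) (p : cod) : Prop :=
  forall T, gct T -> (forall b, Delta b -> sat_co T b) -> sat T p.

(* Ran(Xs) : all tuples of values, as lists of literals X1=x1,...,Xn=xn *)
Fixpoint ranL (Xs : seq V) : seq (seq lit) :=
  match Xs with
  | [::] => [:: [::]]
  | X :: Xs' => [seq (existT _ X x : lit) :: r | x <- enum (Ran X), r <- ranL Xs']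
  end.

Fixpoint bigAnd (a : cod) (l : seq cod) : cod :=
  match l with [::] => a | b :: l' => DAnd a (bigAnd b l') end.
Fixpoint bigOr (a : cod) (l : seq cod) : cod :=
  match l with [::] => a | b :: l' => DOr a (bigOr b l') end.

Definition lit_atom (u : lit) : cod := DEq (tagged u).

Definition eq_and_const (r : seq lit) (Y : V) : cod :=
  match r with
  | [::] => DDep [::] Y
  | u :: r' => DAnd (bigAnd (lit_atom u) (map lit_atom r')) (DDep [::] Y)
  end.

Fixpoint star (p : cod) : cod :=
  match p with
  | DEq X x => DEq x
  | DDep [::] Y => DDep [::] Y
  | DDep Xs Y =>
      match ranL Xs with
      | [::] => DDep [::] Y   (* impossible: all ranges are nonempty *)
      | r :: rs => bigOr (eq_and_const r Y) (map (fun r' => eq_and_const r' Y) rs)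
      end
  | DNeg a => DNeg a
  | DAnd p1 p2 => DAnd (star p1) (star p2)
  | DOr p1 p2 => DOr (star p1) (star p2)
  | DCf l p1 => DCf l (star p1)
  end.

(* [full_inst p a] : a is a full instantiation of p, i.e. a is obtained from p
   by replacing each occurrence of a constancy atom =(X) by some X = x
   (independently for each occurrence), which is exactly p_f for some
   instantiating function f. *)
Inductive full_inst : cod -> co -> Prop :=
  | FI_Eq X (x : Ran X) : full_inst (DEq x) (CEq x)
  | FI_Const Y (y : Ran Y) : full_inst (DDep [::] Y) (CEq y)
  | FI_Neg a : full_inst (DNeg a) (CNeg a)
  | FI_And p1 p2 a1 a2 : full_inst p1 a1 -> full_inst p2 a2 ->
      full_inst (DAnd p1 p2) (CAnd a1 a2)
  | FI_Or p1 p2 a1 a2 : full_inst p1 a1 -> full_inst p2 a2 ->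
      full_inst (DOr p1 p2) (COr a1 a2)
  | FI_Cf l p1 a1 : full_inst p1 a1 -> full_inst (DCf l p1) (CCf l a1).

End CausalTeams.

From mathcomp Require Import all_boot.
From Stdlib Require Import Classical.

Set Implicit Arguments. Unset Strict Implicit. Unset Printing Implicit Defensive.

(* A dependence atom =(X;Y) holds in a team exactly when the team splits,
   according to the values of X, into subteams on which Y is constant; hence
   phi and phi^* are equivalent.  In a formula whose only dependence atoms are
   constancy atoms, each =(Y) can be replaced by Y = y, where y is the value Y
   takes on the subteam in which the atom is evaluated; so a team satisfies
   phi^* iff it satisfies one of its full instantiations.  Finally, CO formulas
   are flat: the compatible pairs whose singleton teams satisfy Delta form the
   largest generalized causal team satisfying Delta, and a full instantiation
   true in that team holds in all of its subteams, i.e. is entailed by Delta. *)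

Section CausalTeams.
Variables (V : finType) (Ran : V -> finType).

Implicit Types (T : team Ran) (a b : co Ran) (phi : cod Ran) (s : assign Ran).

Definition subteam T' T := forall p, T' p -> T p.

Lemma sat_co_flat a T : sat_co T a <-> forall p, T p -> sat_co (fun q => q = p) a.
Proof.
elim: a T => [X x|b IH|b IHb c IHc|b IHb c IHc|l b IH] T /=.
- split=> [H p Tp s [F Es]|H s [F TF]]; last exact: H _ TF s (ex_intro _ F erefl).
  by apply: H; exists F; rewrite Es.
- split=> [H p Tp q -> | H p Tp]; first exact: H.
  exact: (H p Tp p erefl).
- rewrite IHb IHc; split=> [[Hb Hc] p Tp|H]; first by split; [apply: Hb | apply: Hc].
  by split=> p /H [].
- split=> [[T1 [T2 [U [/IHb H1 /IHc H2]]]] p Tp | H].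
  + exists (fun q => q = p /\ T1 q), (fun q => q = p /\ T2 q); rewrite IHb IHc.
    split; last by split=> q [-> ?]; [apply: H1 | apply: H2].
    move=> q; split=> [-> | [] [-> _] //].
    by case: ((U p).1 Tp); [left | right].
  + exists (fun p => T p /\ sat_co (fun q => q = p) b).
    exists (fun p => T p /\ sat_co (fun q => q = p) c).
    rewrite IHb IHc; split; last by split=> p [].
    move=> p; split=> [Tp | [] []] //.
    have [T1 [T2 [U [/IHb H1 /IHc H2]]]] := H p Tp.
    by case: ((U p).1 erefl) => [/H1 ? | /H2 ?]; [left | right].
- split=> [[nc|H] p Tp|H]; first by left.
  + right; rewrite IH => q [s [F [Es E]]].
    by move: H; rewrite IH; apply; exists s, F; rewrite Es.
  + case: (classic (consistent l)) => cl; [right | by left].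
    rewrite IH => q [s [F [TF E]]].
    by case: (H _ TF) => // /IH; apply; exists s, F.
Qed.

Lemma sat_co_sub a T T' : subteam T' T -> sat_co T a -> sat_co T' a.
Proof. by move=> sub; rewrite !sat_co_flat => H p /sub /H. Qed.

Lemma sat_sub phi T T' : subteam T' T -> sat T phi -> sat T' phi.
Proof.
elim: phi T T' => [X x|Xs Y|a|p IHp q IHq|p IHp q IHq|l p IH] T T' sub /=.
- by move=> H s [F /sub TF]; apply: H; exists F.
- by move=> H s s' [F /sub ?] [F' /sub ?]; apply: H; [exists F | exists F'].
- by move=> H r /sub /H.
- by case=> /(IHp _ _ sub) ? /(IHq _ _ sub).
- case=> T1 [T2 [U [H1 H2]]].
  exists (fun r => T' r /\ T1 r), (fun r => T' r /\ T2 r); split; last split.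
  + move=> r; split=> [T'r|[[]|[]]] //.
    by case: ((U r).1 (sub _ T'r)) => ?; [left | right].
  + by apply: IHp H1 => r [].
  + by apply: IHq H2 => r [].
- case=> [?|H]; [by left | right].
  by apply: IH H => r [s [F [/sub ? ?]]]; exists s, F.
Qed.

Definition const_on T (Y : V) :=
  forall s s', team_minus T s -> team_minus T s' -> s Y = s' Y.

Lemma sat_const T Y : sat T (DDep Ran [::] Y) <-> const_on T Y.
Proof. by split=> [H s s' Ts Ts' | H s s' Ts Ts' _]; apply: H. Qed.

Definition sat_lits s (r : seq (lit Ran)) := forall u, u \in r -> s (tag u) = tagged u.

Definition lits_of s (Xs : seq V) : seq (lit Ran) := [seq Tagged Ran (s X) | X <- Xs].

Lemma sat_lits_of s Xs : sat_lits s (lits_of s Xs).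
Proof. by move=> u /mapP [X _ ->]. Qed.

Lemma lits_of_eq s s' Xs :
  lits_of s Xs = lits_of s' Xs <-> forall X, X \in Xs -> s X = s' X.
Proof.
by rewrite /lits_of -eq_in_map; split=> H X /H; [apply: eq_from_Tagged | move->].
Qed.

Lemma lits_of_ranL s Xs : lits_of s Xs \in ranL Ran Xs.
Proof.
elim: Xs => [|X Xs IH] /=; first by rewrite inE.
by apply/allpairsP; exists (s X, lits_of s Xs); rewrite mem_enum.
Qed.

Lemma ranL_sat_lits s Xs r : r \in ranL Ran Xs -> sat_lits s r -> r = lits_of s Xs.
Proof.
elim: Xs r => [|X Xs IH] r /=; first by rewrite inE => /eqP ->.
case/allpairsP => [[x r']] /= [_ r'_in ->] sr.
have -> : s X = x by apply: (sr (Tagged Ran x)); rewrite mem_head.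
by rewrite (IH r') // => u ur; apply: sr; rewrite inE ur orbT.
Qed.

Lemma ranL_uniq Xs : uniq (ranL Ran Xs).
Proof.
elim: Xs => [|X Xs IH] //=.
apply: allpairs_uniq => //; first exact: enum_uniq.
by move=> [x r] [x' r'] _ _ /= [E ->]; rewrite (eq_from_Tagged E).
Qed.

Lemma sat_lit_atoms T u r :
  sat T (bigAnd (lit_atom u) (map (@lit_atom _ _) r)) <->
  forall s, team_minus T s -> sat_lits s (u :: r).
Proof.
elim: r u => [|v r IH] u /=.
  split=> H s Ts; last exact: H s Ts u (mem_head _ _).
  by move=> w; rewrite inE => /eqP ->; apply: H.
rewrite IH; split=> [[Hu Hr] s Ts w|H].
  by rewrite inE => /orP [/eqP -> | /(Hr s Ts)]; [apply: Hu |].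
by split=> [s Ts | s Ts w wr]; apply: H s Ts _ _; rewrite inE ?eqxx ?wr ?orbT.
Qed.

Lemma sat_eq_and_const T r Y :
  sat T (eq_and_const r Y) <-> (forall s, team_minus T s -> sat_lits s r) /\ const_on T Y.
Proof.
case: r => [|u r].
  by split=> [/sat_const cst | [_ /sat_const //]]; split.
rewrite -sat_const -sat_lit_atoms.
by split=> [] [].
Qed.

Lemma sat_bigOrP (I : eqType) (f : I -> cod Ran) i0 js T : uniq (i0 :: js) ->
  sat T (bigOr (f i0) (map f js)) <->
  exists Ts : I -> team Ran,
    (forall p, T p -> exists2 i, i \in i0 :: js & Ts i p) /\
    (forall i, i \in i0 :: js -> sat (Ts i) (f i)).
Proof.
elim: js i0 T => [|i1 js IH] i0 T /=.
  move=> _; split=> [H | [Ts [cover sat_Ts]]].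
    exists (fun _ => T); split=> [p Tp | i]; first by exists i0; rewrite ?inE.
    by rewrite inE => /eqP ->.
  apply: sat_sub (sat_Ts _ (mem_head _ _)) => p /cover [i].
  by rewrite inE => /eqP ->.
case/andP=> i0_notin uniq_js.
split=> [[T1 [T2 [U [H1 /(IH _ _ uniq_js) [Ts [cover sat_Ts]]]]]] | [Ts [cover sat_Ts]]].
  exists (fun i => if i == i0 then T1 else Ts i); split.
    move=> p /(U p).1 [T1p | /cover [i i_in Tsp]]; first by exists i0; rewrite ?eqxx ?mem_head.
    exists i; first by rewrite inE i_in orbT.
    by case: eqP i_in => [-> /(negP i0_notin) | _].
  move=> i; rewrite inE; case: eqP => [-> _ | _ /= i_in]; first exact: H1.
  exact: sat_Ts.
exists (fun p => T p /\ Ts i0 p), (fun p => T p /\ exists2 i, i \in i1 :: js & Ts i p).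
split; last split.
- move=> p; split=> [Tp | [[] | []]] //.
  have [i] := cover p Tp; rewrite inE => /orP [/eqP <- | i_in Tsp]; first by left.
  by right; split=> //; exists i.
- by apply: sat_sub (sat_Ts _ (mem_head _ _)) => p [].
- apply/(IH _ _ uniq_js); exists Ts; split=> [p [_ //] | i i_in].
  by apply: sat_Ts; rewrite inE i_in orbT.
Qed.

Lemma sat_dep_disj T Xs Y r0 rs : ranL Ran Xs = r0 :: rs ->
  sat T (bigOr (eq_and_const r0 Y) (map (fun r => eq_and_const r Y) rs)) <->
  sat T (DDep Ran Xs Y).
Proof.
move=> E; have uniq_rs : uniq (r0 :: rs) by rewrite -E ranL_uniq.
rewrite (sat_bigOrP (fun r => eq_and_const r Y) T uniq_rs) -E; split.
  move=> [Ts [cover sat_Ts]] s s' [F Ts_s] [F' Ts_s'] agree.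
  have [r r_in Tsr] := cover _ Ts_s; have [r' r'_in Tsr'] := cover _ Ts_s'.
  have /sat_eq_and_const [lits_r const_r] := sat_Ts r r_in.
  have /sat_eq_and_const [lits_r' _] := sat_Ts r' r'_in.
  have s_lits : r = lits_of s Xs by apply: ranL_sat_lits r_in _; apply: lits_r; exists F.
  have s'_lits : r' = lits_of s' Xs by apply: ranL_sat_lits r'_in _; apply: lits_r'; exists F'.
  have rr' : r = r' by rewrite s_lits s'_lits; apply/lits_of_eq.
  by apply: const_r; [exists F | exists F'; rewrite rr'].
move=> dep; exists (fun r p => T p /\ sat_lits p.1 r); split.
  move=> [s F] Tp; exists (lits_of s Xs); first exact: lits_of_ranL.
  by split=> //; apply: sat_lits_of.
move=> r r_in; apply/sat_eq_and_const.
split=> [s [F [_ //]] | s s' [F [Ts lits_s]] [F' [Ts' lits_s']]].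
apply: dep; [by exists F | by exists F' |].
by apply/lits_of_eq; rewrite -!(ranL_sat_lits r_in).
Qed.

Lemma sat_star T phi : sat T (star phi) <-> sat T phi.
Proof.
elim: phi T => [X x|[|X Xs] Y|a|p IHp q IHq|p IHp q IHq|l p IH] T //=.
- case E: (ranL Ran (X :: Xs)) => [|r rs]; move: (E) => /= ->; last exact: sat_dep_disj.
  by split=> _ s s' [F Ts]; have := lits_of_ranL s (X :: Xs); rewrite E.
- by rewrite IHp IHq.
- by split=> [[T1 [T2 [U [/IHp H1 /IHq H2]]]] | [T1 [T2 [U [/IHp H1 /IHq H2]]]]]; exists T1, T2.
- by rewrite IH.
Qed.

Fixpoint only_const_atoms phi : bool :=
  match phi with
  | DDep Xs _ => nilp Xs
  | DAnd p q | DOr p q => only_const_atoms p && only_const_atoms q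
  | DCf _ p => only_const_atoms p
  | _ => true
  end.

Lemma only_const_atoms_bigAnd phi ps :
  only_const_atoms (bigAnd phi ps) = only_const_atoms phi && all only_const_atoms ps.
Proof. by elim: ps phi => [|q ps IH] phi /=; rewrite ?andbT ?IH. Qed.

Lemma only_const_atoms_bigOr phi ps :
  only_const_atoms (bigOr phi ps) = only_const_atoms phi && all only_const_atoms ps.
Proof. by elim: ps phi => [|q ps IH] phi /=; rewrite ?andbT ?IH. Qed.

Lemma only_const_atoms_eq_and_const r Y : only_const_atoms (eq_and_const r Y).
Proof. by case: r => [|u r] //=; rewrite only_const_atoms_bigAnd all_map andbT; apply/allP. Qed.

Lemma only_const_atoms_star phi : only_const_atoms (star phi).
Proof.
elim: phi => [X x|[|X Xs] Y|a|p IHp q IHq|p IHp q IHq|l p IH] //=; try exact/andP.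
case E: (ranL Ran (X :: Xs)) => [|r rs]; move: (E) => /= -> //.
rewrite only_const_atoms_bigOr only_const_atoms_eq_and_const all_map.
by apply/allP => r' _; apply: only_const_atoms_eq_and_const.
Qed.

Lemma full_inst_sound phi a T : full_inst phi a -> sat_co T a -> sat T phi.
Proof.
move=> inst; elim: inst T => {phi a} /=
  [X x|Y y|a|p q a b _ IHp _ IHq|p q a b _ IHp _ IHq|l p a _ IH] T //.
- by move=> H; apply/sat_const => s s' /H -> /H ->.
- by case=> /IHp ? /IHq.
- by case=> T1 [T2 [U [/IHp ? /IHq ?]]]; exists T1, T2.
- by case=> [? | /IH ?]; [left | right].
Qed.

Section NonemptyRanges.
Hypothesis HRan : forall X : V, 0 < #|Ran X|.

Lemma const_on_value T Y :
  const_on T Y -> exists y : Ran Y, forall s, team_minus T s -> s Y = y.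
Proof.
move=> cst; case: (classic (exists s, team_minus T s)) => [[s0 Ts0] | noT].
  by exists (s0 Y) => s Ts; apply: cst.
have [y _] := card_gt0P (HRan Y).
by exists y => s Ts; case: noT; exists s.
Qed.

Lemma full_inst_exists phi : only_const_atoms phi -> exists a, full_inst phi a.
Proof.
elim: phi => [X x|[|//] Y|a|p IHp q IHq|p IHp q IHq|l p IH] /=.
- by exists (CEq x); constructor.
- by have [y _] := card_gt0P (HRan Y); exists (CEq y); constructor.
- by exists (CNeg a); constructor.
- by case/andP=> /IHp [a ?] /IHq [b ?]; exists (CAnd a b); constructor.
- by case/andP=> /IHp [a ?] /IHq [b ?]; exists (COr a b); constructor.
- by move=> /IH [a ?]; exists (CCf l a); constructor.
Qed.

Lemma full_inst_complete phi T :
  only_const_atoms phi -> sat T phi -> exists a, full_inst phi a /\ sat_co T a.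
Proof.
elim: phi T => [X x|[|//] Y|a|p IHp q IHq|p IHp q IHq|l p IH] T /=.
- by exists (CEq x); split; first constructor.
- move=> _ /sat_const /const_on_value [y Hy].
  by exists (CEq y); split; first constructor.
- by exists (CNeg a); split; first constructor.
- case/andP=> cp cq [/(IHp _ cp) [a [? ?]] /(IHq _ cq) [b [? ?]]].
  by exists (CAnd a b); split; first constructor.
- case/andP=> cp cq [T1 [T2 [U [/(IHp _ cp) [a [? ?]] /(IHq _ cq) [b [? ?]]]]]].
  by exists (COr a b); split; [constructor | exists T1, T2].
- move=> cp [incons | /(IH _ cp) [a [? ?]]].
    have [a ?] := full_inst_exists cp.
    by exists (CCf l a); split; [constructor | left].
  by exists (CCf l a); split; [constructor | right].
Qed.

Lemma sat_full_inst_star phi T :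
  sat T phi <-> exists a, full_inst (star phi) a /\ sat_co T a.
Proof.
rewrite -sat_star; split=> [|[a [inst Ha]]]; last exact: full_inst_sound inst Ha.
exact: full_inst_complete (only_const_atoms_star phi).
Qed.

End NonemptyRanges.

Definition largest_team (Delta : co Ran -> Prop) : team Ran :=
  fun p => (wf_system p.2 /\ compatible p.1 p.2) /\
           forall b, Delta b -> sat_co (fun q => q = p) b.

Lemma gct_largest_team Delta : gct (largest_team Delta).
Proof. by move=> p []. Qed.

Lemma largest_team_sat Delta b : Delta b -> sat_co (largest_team Delta) b.
Proof. by move=> Db; apply/sat_co_flat => p [_]; apply. Qed.

Lemma sub_largest_team Delta T :
  gct T -> (forall b, Delta b -> sat_co T b) -> subteam T (largest_team Delta).
Proof.
move=> gT TDelta p Tp; split; first exact: gT.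
by move=> b /TDelta; rewrite sat_co_flat; apply.
Qed.

End CausalTeams.

Theorem corollary5p17 (V : finType) (Ran : V -> finType)
  (HV : 0 < #|V|) (HRan : forall X : V, 0 < #|Ran X|)
  (Delta : co Ran -> Prop) (phi : cod Ran) :
  entails Delta phi <->
  exists a : co Ran, full_inst (star phi) a /\ entails_co Delta a.
Proof.
split=> [ent | [a [inst ent]] T gT TDelta].
  have := ent _ (@gct_largest_team _ _ Delta) (@largest_team_sat _ _ Delta).
  case/(sat_full_inst_star HRan) => a [inst Ha].
  exists a; split=> // T gT TDelta.
  exact: sat_co_sub (sub_largest_team gT TDelta) Ha.
by apply/(sat_full_inst_star HRan); exists a; split; last exact: ent.
Qed.
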